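(* The set $\mathcal{L}$ of $L$-convex polyominoes equals $Av_{\mathfrak{P}}(H,V,S_1,S_2)$, where $H=\begin{bmatrix}1&0&1\end{bmatrix}$, $V=\begin{bmatrix}1\\0\\1\end{bmatrix}$, $S_1=\begin{bmatrix}1&0\\0&1\end{bmatrix}$ and $S_2=\begin{bmatrix}0&1\\1&0\end{bmatrix}$.
   Context: A polyomino is a finite union of unit cells of $\mathbb{Z}\times\mathbb{Z}$ that is connected via edge adjacency, up to translation, identified with the binary matrix of its minimal bounding rectangle (entry $1$ iff the corresponding unit square is a cell; rows numbered bottom to top, first written row of a displayed matrix is the top row). A matrix is a submatrix of another if obtained by deleting rows and/or columns; $Av_{\mathfrak{P}}(\mathcal{M})$ is the set of polyominoes with no submatrix in $\mathcal{M}$. A polyomino is convex if each of its rows and each of its columns is connected. A path in a polyomino is a sequence of distinct cells of the polyomino in which consecutive cells share an edge; it is monotone if all its horizontal steps go in the same direction and all its vertical steps go in the same direction; a change of direction is a place where a horizontal step is followed by a vertical one or vice versa. A polyomino is $L$-convex if it is convex and every pair of its cells can be connected by a monotone path with at most one change of direction. *)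

From mathcomp Require Import all_boot all_algebra.
Set Implicit Arguments. Unset Strict Implicit. Unset Printing Implicit Defensive.

(* A binary matrix A : 'M[bool]_(m, n); row index 0 is the top (first written)
   row, column index 0 the leftmost column.  Cells are positions (i, j) : nat*nat
   (row, column) with A i j = true. *)

Definition cellb (m n : nat) (A : 'M[bool]_(m, n)) (p : nat * nat) : bool :=
  if (insub p.1 : option 'I_m) is Some i then
    if (insub p.2 : option 'I_n) is Some j then A i j else false
  else false.

Definition adj (p q : nat * nat) : bool :=
  ((p.1 == q.1) && ((p.2.+1 == q.2) || (q.2.+1 == p.2))) ||
  ((p.2 == q.2) && ((p.1.+1 == q.1) || (q.1.+1 == p.1))).

Definition is_path_between (m n : nat) (A : 'M[bool]_(m, n))
    (c1 c2 : nat * nat) (s : seq (nat * nat)) : Prop :=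
  [/\ all (cellb A) (c1 :: s), uniq (c1 :: s), path adj c1 s & last c1 s = c2].

Definition steps (c1 : nat * nat) (s : seq (nat * nat)) :=
  zip (c1 :: s) s.

Definition monotone (c1 : nat * nat) (s : seq (nat * nat)) : bool :=
  let st := steps c1 s in
  ~~ (has (fun pq : (nat*nat)*(nat*nat) => pq.1.2 < pq.2.2) st &&
      has (fun pq : (nat*nat)*(nat*nat) => pq.2.2 < pq.1.2) st) &&
  ~~ (has (fun pq : (nat*nat)*(nat*nat) => pq.1.1 < pq.2.1) st &&
      has (fun pq : (nat*nat)*(nat*nat) => pq.2.1 < pq.1.1) st).

Definition changes (c1 : nat * nat) (s : seq (nat * nat)) : nat :=
  let hs := map (fun pq : (nat*nat)*(nat*nat) => pq.1.1 == pq.2.1) (steps c1 s) in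
  count (fun ab : bool * bool => ab.1 != ab.2) (zip hs (behead hs)).

(* A is (the matrix of the minimal bounding rectangle of) a polyomino:
   nonempty, every row and every column contains a cell, and the cells are
   connected via edge adjacency. *)
Definition is_polyomino (m n : nat) (A : 'M[bool]_(m, n)) : Prop :=
  [/\ 0 < m, 0 < n,
      (forall i : 'I_m, exists j : 'I_n, A i j),
      (forall j : 'I_n, exists i : 'I_m, A i j) &
      (forall c1 c2, cellb A c1 -> cellb A c2 ->
         exists s, is_path_between A c1 c2 s)].

Definition convex (m n : nat) (A : 'M[bool]_(m, n)) : Prop :=
  (forall (i : 'I_m) (j1 j j2 : 'I_n), j1 <= j <= j2 -> A i j1 -> A i j2 -> A i j) /\
  (forall (j : 'I_n) (i1 i i2 : 'I_m), i1 <= i <= i2 -> A i1 j -> A i2 j -> A i j).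

Definition L_convex (m n : nat) (A : 'M[bool]_(m, n)) : Prop :=
  convex A /\
  forall c1 c2, cellb A c1 -> cellb A c2 ->
    exists s, [/\ is_path_between A c1 c2 s, monotone c1 s & changes c1 s <= 1].

Definition submatrix (p q m n : nat) (B : 'M[bool]_(p, q)) (A : 'M[bool]_(m, n)) : Prop :=
  exists (f : 'I_p -> 'I_m) (g : 'I_q -> 'I_n),
    [/\ (forall i i' : 'I_p, i < i' -> f i < f i'),
        (forall j j' : 'I_q, j < j' -> g j < g j') &
        (forall i j, B i j = A (f i) (g j))].

Definition Hpat : 'M[bool]_(1, 3) := \matrix_(i < 1, j < 3) (j != 1%N :> nat).
Definition Vpat : 'M[bool]_(3, 1) := \matrix_(i < 3, j < 1) (i != 1%N :> nat).
Definition S1pat : 'M[bool]_(2, 2) := \matrix_(i < 2, j < 2) (i == j :> nat).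
Definition S2pat : 'M[bool]_(2, 2) := \matrix_(i < 2, j < 2) (i != j :> nat).

Definition avoids_HVS (m n : nat) (A : 'M[bool]_(m, n)) : Prop :=
  [/\ ~ submatrix Hpat A, ~ submatrix Vpat A, ~ submatrix S1pat A & ~ submatrix S2pat A].

From mathcomp Require Import all_boot all_algebra.
From mathcomp Require Import zify.
Set Implicit Arguments. Unset Strict Implicit. Unset Printing Implicit Defensive.

(* A gap inside a row (column) of A is exactly an occurrence of H (V), so
   avoiding H and V is convexity.  A monotone path with at most one change of
   direction from (i1, j1) to (i2, j2) passes through one of the corners
   (i1, j2), (i2, j1).  Conversely, if A is convex and one of these corners is
   a cell, the L-shaped path through it lies in A.  So L-convexity is convexity
   plus "for any two cells, one of their corners is a cell", and two cells
   whose corners are both empty form S1 or S2, according to their relative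
   position. *)

Section Links.
Variable T : Type.
Implicit Types (x y : T) (s : seq T).

Definition links (x : T) (s : seq T) : seq (T * T) := zip (x :: s) s.

Definition swap (pq : T * T) : T * T := (pq.2, pq.1).

Lemma path_links (r : rel T) x s : path r x s = all (fun pq => r pq.1 pq.2) (links x s).
Proof. by elim: s x => [|y s IH] x //=; rewrite -IH. Qed.

Lemma links_cat x s1 s2 : links x (s1 ++ s2) = links x s1 ++ links (last x s1) s2.
Proof. by elim: s1 x => [|y s1 IH] x /=; [case: s2|rewrite -IH]. Qed.

Lemma links_rcons x s y : links x (rcons s y) = rcons (links x s) (last x s, y).
Proof. by elim: s x => [|z s IH] x //=; rewrite -IH. Qed.

Lemma last_rev x s : last x (rev s) = head x s.
Proof. by case: s => //= y s; rewrite rev_cons last_rcons. Qed.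

Lemma rev_cons_belast x s : rev (x :: s) = last x s :: rev (belast x s).
Proof. by rewrite lastI rev_rcons. Qed.

Lemma links_rev x s :
  links (last x s) (rev (belast x s)) = rev (map swap (links x s)).
Proof.
elim: s x => [|y s IH] x //=.
rewrite rev_cons links_rcons IH last_rev /= rev_cons.
by case: s {IH}.
Qed.

End Links.

Definition switches (l : seq bool) : nat :=
  count (fun ab : bool * bool => ab.1 != ab.2) (zip l (behead l)).

Lemma switches_rev l : switches (rev l) = switches l.
Proof.
case: l => [|b l] //; rewrite /switches rev_cons_belast.
rewrite -[zip _ _]/(links _ _) -[zip (b :: l) _]/(links _ _) links_rev.
by rewrite count_rev count_map; apply: eq_count => -[x y]; rewrite /= eq_sym.
Qed.

Lemma switches_nseq q b : switches (nseq q b) = 0.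
Proof. by elim: q => [|[|q] IH] //; rewrite /switches /= eqxx. Qed.

Lemma switches_nseq_cat p q b b' : switches (nseq p b ++ nseq q b') <= 1.
Proof.
elim: p => [|[|p] IH]; first by rewrite switches_nseq.
  case: q {IH} => [|q] //.
  by rewrite /switches /= -/(switches (nseq q.+1 b')) switches_nseq; case: (_ != _).
by rewrite /switches /= eqxx.
Qed.

Fixpoint iota_down (x k : nat) : seq nat :=
  if k is k'.+1 then x.-1 :: iota_down x.-1 k' else [::].

Definition seg (x y : nat) : seq nat :=
  if x <= y then iota x.+1 (y - x) else iota_down x (x - y).

Lemma last_iota x k : last x (iota x.+1 k) = x + k.
Proof. by elim: k x => [|k IH] x /=; rewrite ?addn0 // IH addnS. Qed.

Lemma last_iota_down x k : k <= x -> last x (iota_down x k) = x - k.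
Proof. by elim: k x => [|k IH] x /= => [|k_le_x]; rewrite ?subn0 // IH; lia. Qed.

Lemma path_iota x k : path (fun u v => v == u.+1) x (iota x.+1 k).
Proof. by elim: k x => [|k IH] x //=; rewrite eqxx IH. Qed.

Lemma path_iota_down x k : k <= x -> path (fun u v => u == v.+1) x (iota_down x k).
Proof.
elim: k x => [|k IH] x //= k_lt_x.
by rewrite IH ?andbT; [apply/eqP|]; lia.
Qed.

Lemma mem_iota_down x k y : k <= x -> y \in iota_down x k -> x - k <= y < x.
Proof.
elim: k x => [|k IH] x //= k_lt_x; rewrite inE => /orP[/eqP->|/IH]; lia.
Qed.

Lemma last_seg x y : last x (seg x y) = y.
Proof. by rewrite /seg; case: leqP => le_xy; rewrite (last_iota, last_iota_down); lia. Qed.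

Lemma mem_seg x y k : k \in seg x y -> minn x y <= k <= maxn x y.
Proof.
rewrite /seg; case: leqP => [le_xy|lt_yx]; first by rewrite mem_iota; lia.
by move/(mem_iota_down (leq_subr _ _)); lia.
Qed.

Lemma path_seg x y :
  path (fun u v => v == u.+1) x (seg x y) || path (fun u v => u == v.+1) x (seg x y).
Proof.
by rewrite /seg; case: leqP => _; rewrite ?path_iota // path_iota_down ?orbT ?leq_subr.
Qed.

Lemma path_seg_adjacent x y : path (fun u v => (u.+1 == v) || (v.+1 == u)) x (seg x y).
Proof.
by case/orP: (path_seg x y); apply: sub_path => u v /eqP->; rewrite eqxx ?orbT.
Qed.

Lemma path_seg_monotone x y : path leq x (seg x y) || path geq x (seg x y).
Proof.
case/orP: (path_seg x y) => p; apply/orP; [left|right]; apply: sub_path p => u v /eqP->;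
  exact: leqnSn.
Qed.

Lemma seg_uniq x y : uniq (x :: seg x y).
Proof.
case/orP: (path_seg x y) => p.
  by apply: (sorted_uniq ltn_trans ltnn); apply: sub_path p => u v /eqP->.
apply: (@sorted_uniq _ gtn (fun _ _ _ h1 h2 => ltn_trans h2 h1) ltnn).
by apply: sub_path p => u v /eqP->; exact: ltnSn.
Qed.

(** * Paths with at most one change of direction *)

Section Paths.
Implicit Types (c x y z w : nat * nat) (s : seq (nat * nat)).

Definition horizontal (pq : (nat * nat) * (nat * nat)) : bool := pq.1.1 == pq.2.1.

Lemma changesE c s : changes c s = switches (map horizontal (steps c s)).
Proof. by []. Qed.

Lemma changes_cons2 c x y s :
  changes c [:: x, y & s] = ((c.1 == x.1) != (x.1 == y.1)) + changes x (y :: s).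
Proof. by []. Qed.

(* [h] tells whether the first step of a path is horizontal: a straight run
   keeps [level h] fixed, and the corner the path turns at is [corner_cell h]
   of its endpoints. *)
Definition level (h : bool) x : nat := if h then x.1 else x.2.

Definition corner_cell (h : bool) x z : nat * nat :=
  if h then (x.1, z.2) else (z.1, x.2).

Lemma adj_level x y : adj x y -> level (x.1 == y.1) x = level (x.1 == y.1) y.
Proof. by rewrite /adj /level; case: eqP => // _ /orP[/andP[/eqP] | /andP[/eqP]]. Qed.

Lemma corner_cell_level h x y z :
  level h x = level h y -> corner_cell h x z = corner_cell h y z.
Proof. by case: h => /= ->. Qed.

Lemma corner_cell_id h y z : level (~~ h) z = level (~~ h) y -> corner_cell h y z = y.
Proof. by case: h => /= ->; rewrite -surjective_pairing. Qed.

Lemma level_last_straight x y s : path adj x (y :: s) -> changes x (y :: s) = 0 ->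
  level (x.1 == y.1) (last y s) = level (x.1 == y.1) x.
Proof.
elim: s x y => [|z s IH] x y /= => [/andP[/adj_level-> _] //|/andP[xy yzs]].
rewrite changes_cons2; case: (eqVneq (x.1 == y.1) (y.1 == z.1)) => [e /= /(IH _ _ yzs)|//].
by rewrite -e => ->; rewrite (adj_level xy).
Qed.

Lemma corner_cell_mem x y s : path adj x (y :: s) -> changes x (y :: s) <= 1 ->
  corner_cell (x.1 == y.1) x (last y s) \in [:: x, y & s].
Proof.
elim: s x y => [|z s IH] x y /= => [/andP[xy _] _|/andP[xy yzs]].
  by rewrite (corner_cell_level _ (adj_level xy)) corner_cell_id // !inE eqxx orbT.
rewrite changes_cons2 (corner_cell_level _ (adj_level xy)).
case: (eqVneq (x.1 == y.1) (y.1 == z.1)) => [e /(IH _ _ yzs)|h'].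
  by rewrite -e => mem_yzs; rewrite inE mem_yzs orbT.
rewrite add1n ltnS leqn0 => /eqP /(level_last_straight yzs).
have -> : (y.1 == z.1) = ~~ (x.1 == y.1) by case: (x.1 == y.1) (y.1 == z.1) h' => -[].
by move=> /corner_cell_id ->; rewrite !inE eqxx orbT.
Qed.

Lemma path_corner c s : path adj c s -> changes c s <= 1 ->
  exists h, corner_cell h c (last c s) \in c :: s.
Proof.
case: s => [|y s] ps cs; first by exists true; rewrite /= -surjective_pairing inE.
by exists (c.1 == y.1); apply: corner_cell_mem.
Qed.

Definition monotone_in (f : nat * nat -> nat) c s : bool :=
  path (relpre f leq) c s || path (relpre f geq) c s.

Lemma no_descent (f : nat * nat -> nat) c s : path (relpre f leq) c s ->
  has (fun pq : (nat * nat) * (nat * nat) => f pq.2 < f pq.1) (steps c s) = false.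
Proof.
by rewrite path_links => h; apply/negbTE/hasPn => pq /(allP h) /=; rewrite -leqNgt.
Qed.

Lemma no_ascent (f : nat * nat -> nat) c s : path (relpre f geq) c s ->
  has (fun pq : (nat * nat) * (nat * nat) => f pq.1 < f pq.2) (steps c s) = false.
Proof.
by rewrite path_links => h; apply/negbTE/hasPn => pq /(allP h) /=; rewrite -leqNgt.
Qed.

Lemma monotone_coords c s : monotone_in fst c s -> monotone_in snd c s -> monotone c s.
Proof.
rewrite /monotone => /orP[/no_descent|/no_ascent]-> /orP[/no_descent|/no_ascent]->;
  by rewrite ?andbF ?andFb.
Qed.

Lemma changes_turn_le1 c s1 s2 :
  path (fun x y => x.1 == y.1) c s1 -> path (fun x y => x.1 != y.1) (last c s1) s2 ->
  changes c (s1 ++ s2) <= 1.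
Proof.
rewrite changesE /steps -/(links _ _) links_cat map_cat !path_links => h1 h2.
have /all_pred1P-> : all (pred1 true) (map horizontal (links c s1)).
  by rewrite all_map; apply: sub_all h1 => pq; rewrite /= /horizontal => ->.
have /all_pred1P-> : all (pred1 false) (map horizontal (links (last c s1) s2)).
  by rewrite all_map; apply: sub_all h2 => pq; rewrite /= /horizontal => /negbTE ->.
exact: switches_nseq_cat.
Qed.

Definition L_path m n (A : 'M[bool]_(m, n)) c1 c2 s : Prop :=
  [/\ is_path_between A c1 c2 s, monotone c1 s & changes c1 s <= 1].

Lemma adjC x y : adj x y = adj y x.
Proof.
by rewrite /adj (eq_sym x.1) (eq_sym x.2) (orbC (x.2.+1 == _)) (orbC (x.1.+1 == _)).
Qed.

Lemma monotone_rev c s : monotone (last c s) (rev (belast c s)) = monotone c s.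
Proof.
rewrite /monotone /steps -/(links _ _) -/(links c s) links_rev !has_rev !has_map.
by congr (~~ _ && ~~ _); apply: andbC.
Qed.

Lemma changes_rev c s : changes (last c s) (rev (belast c s)) = changes c s.
Proof.
rewrite !changesE /steps -/(links _ _) -/(links c s) links_rev map_rev switches_rev.
by rewrite -map_comp; congr switches; apply: eq_map => -[x y]; apply: eq_sym.
Qed.

Lemma L_path_rev m n (A : 'M[bool]_(m, n)) c1 c2 s :
  L_path A c1 c2 s -> L_path A c2 c1 (rev (belast c1 s)).
Proof.
case=> -[cells uniq_s path_s <-] mono ch.
split; rewrite ?monotone_rev ?changes_rev //; split.
- by rewrite -rev_cons_belast all_rev.
- by rewrite -rev_cons_belast rev_uniq.
- by rewrite rev_path; apply: sub_path path_s => x y; rewrite adjC.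
- by rewrite last_rev; case: s {cells uniq_s path_s mono ch}.
Qed.

End Paths.

(** * L-shaped paths *)

Definition row_leg (a b d : nat) : seq (nat * nat) := map (pair a) (seg b d).
Definition col_leg (d a c : nat) : seq (nat * nat) := map (fun k => (k, d)) (seg a c).

Lemma path_row_leg (r : rel (nat * nat)) a b d :
  path r (a, b) (row_leg a b d) = path (fun u v => r (a, u) (a, v)) b (seg b d).
Proof. exact: path_map. Qed.

Lemma path_col_leg (r : rel (nat * nat)) d a c :
  path r (a, d) (col_leg d a c) = path (fun u v => r (u, d) (v, d)) a (seg a c).
Proof. exact: (path_map (f := fun k => (k, d))). Qed.

Section Elbow.
Variables a b c d : nat.

Definition elbow : seq (nat * nat) := row_leg a b d ++ col_leg d a c.

Lemma last_row_leg : last (a, b) (row_leg a b d) = (a, d).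
Proof. by rewrite last_map last_seg. Qed.

Lemma last_elbow : last (a, b) elbow = (c, d).
Proof.
by rewrite last_cat last_row_leg -[(a, d)]/((fun k => (k, d)) a) last_map last_seg.
Qed.

Lemma path_elbow (r : rel (nat * nat)) :
  path r (a, b) elbow =
  path (fun u v => r (a, u) (a, v)) b (seg b d) &&
  path (fun u v => r (u, d) (v, d)) a (seg a c).
Proof. by rewrite cat_path last_row_leg path_row_leg path_col_leg. Qed.

Lemma all_elbow (P : pred (nat * nat)) :
  (forall k, minn b d <= k <= maxn b d -> P (a, k)) ->
  (forall k, minn a c <= k <= maxn a c -> P (k, d)) ->
  all P ((a, b) :: elbow).
Proof.
move=> Prow Pcol; rewrite /= /elbow all_cat !all_map Prow /=; last by lia.
by apply/andP; split; apply/allP => k /mem_seg; [apply: Prow|apply: Pcol].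
Qed.

Lemma elbow_uniq : uniq ((a, b) :: elbow).
Proof.
have := seg_uniq a c; rewrite cons_uniq => /andP[a_notin_seg uniq_seg].
rewrite -cat_cons cat_uniq -[_ :: row_leg _ _ _]/(map (pair a) (b :: seg b d)).
rewrite !map_inj_uniq ?seg_uniq ?uniq_seg ?andbT /=; try by move=> u v [].
apply/hasPn => _ /mapP[k k_in ->].
rewrite inE; apply/norP; split; apply/negP; [case/eqP|case/mapP => j _ []] => eka _;
  by rewrite eka (negPf a_notin_seg) in k_in.
Qed.

Lemma path_adj_elbow : path adj (a, b) elbow.
Proof.
rewrite path_elbow; apply/andP; split;
  by apply: sub_path (path_seg_adjacent _ _) => u v uv; rewrite /adj /= eqxx uv ?orbT.
Qed.

Lemma monotone_elbow : monotone (a, b) elbow.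
Proof.
have const_path x y (r : rel nat) k : r k k -> path (fun _ _ => r k k) x (seg x y).
  by move=> rkk; apply: sub_path (path_seg_adjacent x y).
apply: monotone_coords; rewrite /monotone_in !path_elbow /=.
  by case/orP: (path_seg_monotone a c) => ->; rewrite const_path ?orbT.
by case/orP: (path_seg_monotone b d) => ->; rewrite const_path ?orbT.
Qed.

Lemma changes_elbow : changes (a, b) elbow <= 1.
Proof.
apply: changes_turn_le1; rewrite ?path_row_leg ?last_row_leg ?path_col_leg.
  by apply: sub_path (path_seg_adjacent b d) => u v _ /=.
by apply: sub_path (path_seg_adjacent a c) => u v /orP[] /eqP <- /=; lia.
Qed.

End Elbow.

(** * Convexity and corners of binary matrices *)

Definition row_convex m n (A : 'M[bool]_(m, n)) : Prop :=
  forall (i : 'I_m) (j1 j j2 : 'I_n), j1 <= j <= j2 -> A i j1 -> A i j2 -> A i j.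

Definition col_convex m n (A : 'M[bool]_(m, n)) : Prop :=
  forall (j : 'I_n) (i1 i i2 : 'I_m), i1 <= i <= i2 -> A i1 j -> A i2 j -> A i j.

Definition corner_closed m n (A : 'M[bool]_(m, n)) : Prop :=
  forall (i1 i2 : 'I_m) (j1 j2 : 'I_n), A i1 j1 -> A i2 j2 -> A i1 j2 || A i2 j1.

Section Cells.
Variables (m n : nat) (A : 'M[bool]_(m, n)).

Lemma cellb_ord (i : 'I_m) (j : 'I_n) : cellb A (val i, val j) = A i j.
Proof. by rewrite /cellb /= !valK. Qed.

Lemma cellb_ordinals p :
  cellb A p -> exists (i : 'I_m) (j : 'I_n), p = (val i, val j) /\ A i j.
Proof.
rewrite /cellb; case: insubP => // i _ ei; case: insubP => // j _ ej Aij.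
by exists i, j; rewrite ei ej -surjective_pairing.
Qed.

Lemma cellb_tr p : cellb A^T (p.2, p.1) = cellb A p.
Proof. by rewrite /cellb /=; case: insubP => // i; case: insubP => // j; rewrite mxE. Qed.

Lemma row_segment : row_convex A -> forall (i : 'I_m) (j1 j2 : 'I_n) k,
  A i j1 -> A i j2 -> minn j1 j2 <= k <= maxn j1 j2 -> cellb A (val i, k).
Proof.
move=> rowc i j1 j2 k A1 A2 k_between.
have k_lt_n : k < n by move: (ltn_ord j1) (ltn_ord j2); lia.
rewrite -[k]/(val (Ordinal k_lt_n)) cellb_ord.
by case: (leqP j1 j2) => j12; [apply: (rowc _ j1 _ j2) | apply: (rowc _ j2 _ j1)] => //=; lia.
Qed.

End Cells.

Lemma col_convex_tr m n (A : 'M[bool]_(m, n)) : col_convex A <-> row_convex A^T.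
Proof.
by split=> conv j i1 i i2 ii; have := conv j i1 i i2 ii; rewrite !mxE.
Qed.

Lemma col_segment m n (A : 'M[bool]_(m, n)) :
  col_convex A -> forall (j : 'I_n) (i1 i2 : 'I_m) k,
  A i1 j -> A i2 j -> minn i1 i2 <= k <= maxn i1 i2 -> cellb A (k, val j).
Proof.
move=> /col_convex_tr colc j i1 i2 k A1 A2 k_between.
by rewrite -cellb_tr /=; apply: (row_segment colc) k_between; rewrite mxE.
Qed.

Lemma submatrix_tr p q m n (B : 'M[bool]_(p, q)) (A : 'M[bool]_(m, n)) :
  submatrix B A -> submatrix B^T A^T.
Proof. by case=> f [g [mf mg eB]]; exists g, f; split=> // i j; rewrite !mxE. Qed.

Lemma submatrix_trmx p q m n (B : 'M[bool]_(p, q)) (A : 'M[bool]_(m, n)) :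
  submatrix B^T A <-> submatrix B A^T.
Proof. by split=> /submatrix_tr; rewrite trmxK. Qed.

Section Submatrix.
Variables (p q m n : nat) (B : 'M[bool]_(p, q)) (A : 'M[bool]_(m, n)).
Hypothesis subBA : submatrix B A.

Lemma row_convex_submatrix : row_convex A -> row_convex B.
Proof.
case: subBA => f [g [_ mono_g eB]] rowc i j1 j j2 /andP[le1 le2].
rewrite !eB; apply: rowc.
have le_g (x y : 'I_q) : x <= y -> g x <= g y.
  by rewrite leq_eqVlt => /orP[/eqP/val_inj-> // | /mono_g/ltnW].
by rewrite !le_g.
Qed.

Lemma corner_closed_submatrix : corner_closed A -> corner_closed B.
Proof. by case: subBA => f [g [_ _ eB]] cc i1 i2 j1 j2; rewrite !eB; apply: cc. Qed.

End Submatrix.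

Definition sel2 T (a b : T) (x : 'I_2) : T := if x == 0 :> nat then a else b.

Lemma submatrix2 m n (B : 'M[bool]_2) (A : 'M[bool]_(m, n))
    (i1 i2 : 'I_m) (j1 j2 : 'I_n) :
  i1 < i2 -> j1 < j2 -> (forall x y, B x y = A (sel2 i1 i2 x) (sel2 j1 j2 y)) ->
  submatrix B A.
Proof.
move=> lt_i lt_j eB; exists (sel2 i1 i2), (sel2 j1 j2).
by split=> // -[[|[|//]] ?] [[|[|//]] ?].
Qed.

Lemma Hpat_tr : trmx Hpat = Vpat.
Proof. by apply/matrixP => i j; rewrite !mxE. Qed.

Lemma row_convexP m n (A : 'M[bool]_(m, n)) : row_convex A <-> ~ submatrix Hpat A.
Proof.
split=> [rowc /row_convex_submatrix /(_ rowc) rowH | nH i j1 j j2 jj A1 A2].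
  by have := rowH ord0 ord0 (@Ordinal 3 1 isT) ord_max isT; rewrite !mxE; move/(_ isT isT).
apply/idPn => nAj; apply: nH; case/andP: jj => le1 le2.
have lt1 : j1 < j by rewrite ltn_neqAle le1 andbT; apply: contraNneq nAj => /val_inj <-.
have lt2 : j < j2 by rewrite ltn_neqAle le2 andbT; apply: contraNneq nAj => /val_inj ->.
exists (fun=> i),
  (fun t : 'I_3 => if t == 0 :> nat then j1 else if t == 1 :> nat then j else j2).
split.
- by move=> [[|//] ?] [[|//] ?].
- by move=> [[|[|[|//]]] ?] [[|[|[|//]]] ?] //= _; apply: ltn_trans lt2.
- by move=> [[|//] ?] [[|[|[|//]]] ?]; rewrite mxE /= ?A1 ?A2 ?(negbTE nAj).
Qed.

Lemma col_convexP m n (A : 'M[bool]_(m, n)) : col_convex A <-> ~ submatrix Vpat A.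
Proof. by rewrite col_convex_tr row_convexP -submatrix_trmx Hpat_tr. Qed.

Lemma convexP m n (A : 'M[bool]_(m, n)) :
  convex A <-> ~ submatrix Hpat A /\ ~ submatrix Vpat A.
Proof. by rewrite -row_convexP -col_convexP. Qed.

Lemma corner_closedP m n (A : 'M[bool]_(m, n)) :
  corner_closed A <-> ~ submatrix S1pat A /\ ~ submatrix S2pat A.
Proof.
split=> [cc | [nS1 nS2]].
  split=> /corner_closed_submatrix /(_ cc) ccS.
    by have := ccS ord0 ord_max ord0 ord_max; rewrite !mxE; move/(_ isT isT).
  by have := ccS ord0 ord_max ord_max ord0; rewrite !mxE; move/(_ isT isT).
move=> i1 i2 j1 j2 A1 A2; apply/idPn; rewrite negb_or => /andP[n12 n21].
wlog lt_i : i1 i2 j1 j2 A1 A2 n12 n21 / i1 < i2 => [hwlog|].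
  case: (ltngtP i1 i2) => [lt_i|lt_i|/val_inj eq_i].
  - exact: (hwlog i1 i2 j1 j2).
  - exact: (hwlog i2 i1 j2 j1).
  - by rewrite eq_i A2 in n12.
case: (ltngtP j1 j2) => [lt_j|lt_j|/val_inj eq_j]; last by rewrite -eq_j A1 in n12.
  by apply: nS1; apply: (submatrix2 lt_i lt_j) => -[[|[|//]] ?] [[|[|//]] ?];
    rewrite mxE /= ?A1 ?A2 ?(negbTE n12) ?(negbTE n21).
by apply: nS2; apply: (submatrix2 lt_i lt_j) => -[[|[|//]] ?] [[|[|//]] ?];
  rewrite mxE /= ?A1 ?A2 ?(negbTE n12) ?(negbTE n21).
Qed.

Section LConvexity.
Variables (m n : nat) (A : 'M[bool]_(m, n)).

Lemma L_path_elbow a b c d :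
  (forall k, minn b d <= k <= maxn b d -> cellb A (a, k)) ->
  (forall k, minn a c <= k <= maxn a c -> cellb A (k, d)) ->
  L_path A (a, b) (c, d) (elbow a b c d).
Proof.
move=> Arow Acol; split; first split; rewrite ?elbow_uniq ?path_adj_elbow ?last_elbow //.
- exact: all_elbow.
- exact: monotone_elbow.
- exact: changes_elbow.
Qed.

Lemma L_path_convex (i i' : 'I_m) (j j' : 'I_n) : convex A ->
  A i j -> A i j' -> A i' j' -> L_path A (val i, val j) (val i', val j') (elbow i j i' j').
Proof.
case=> rowc colc Aij Aij' Ai'j'.
by apply: L_path_elbow => k; [apply: (row_segment rowc) | apply: (col_segment colc)].
Qed.

Lemma L_convex_corner_closed : L_convex A -> corner_closed A.
Proof.
case=> _ Lpaths i1 i2 j1 j2 A1 A2.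
have := Lpaths (val i1, val j1) (val i2, val j2); rewrite !cellb_ord.
case/(_ A1 A2) => s [[cells _ path_s last_s] _ /(path_corner path_s)[h]].
by rewrite last_s => /(allP cells); case: h; rewrite /= cellb_ord => ->; rewrite ?orbT.
Qed.

Lemma convex_corner_closed_L_convex : convex A -> corner_closed A -> L_convex A.
Proof.
move=> conv cc; split=> // c1 c2.
move=> /cellb_ordinals[i1 [j1 [-> A1]]] /cellb_ordinals[i2 [j2 [-> A2]]].
case/orP: (cc _ _ _ _ A1 A2) => [A12|A21].
  by exists (elbow i1 j1 i2 j2); apply: L_path_convex.
(* The elbows turn after the row leg, so reach the corner (i2, j1) from (i2, j2). *)
by exists (rev (belast (val i2, val j2) (elbow i2 j2 i1 j1))); apply/L_path_rev/L_path_convex.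
Qed.

Lemma L_convexP : L_convex A <-> convex A /\ corner_closed A.
Proof.
split=> [LA | [conv cc]]; last exact: convex_corner_closed_L_convex.
by split; [case: LA | exact: L_convex_corner_closed].
Qed.

End LConvexity.

Theorem proposition15 (m n : nat) (A : 'M[bool]_(m, n)) :
  is_polyomino A -> (L_convex A <-> avoids_HVS A).
Proof.
move=> _; rewrite L_convexP convexP corner_closedP.
by split=> [[[nH nV] [nS1 nS2]] | [nH nV nS1 nS2]].
Qed.
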